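(* Let $\Gamma$ be a weighted digraph with vertex set $\{1,\dots,n\}$, $n>1$, without loops and with strictly positive arc weights, with Laplacian matrix $L$, matrices of in-forests $Q_k$ and in-forest weights $\sigma_k$. Then for every $k=0,1,2,\dots$, $$Q_{k+1}=(-L)Q_k+\sigma_{k+1}I,\qquad \sigma_{k+1}=\frac{\operatorname{tr}(LQ_k)}{k+1}.$$
   Context: $W=(w_{ij})$ is the matrix of arc weights ($w_{ij}>0$ iff there is an arc $i\to j$, else $0$). The Laplacian $L=(\ell_{ij})$: $\ell_{ij}=-w_{ij}$ for $j\ne i$, $\ell_{ii}=\sum_{k\ne i}w_{ik}$. The weight of a subgraph is the product of its arc weights (1 if no arcs); the weight of a set of subgraphs is the sum of their weights (0 for the empty set). A converging tree is a weakly connected digraph with one vertex (the root) of outdegree 0 and all others of outdegree 1; an in-forest is a spanning subgraph of $\Gamma$ whose weak components are converging trees. $\sigma_k$ is the total weight of in-forests of $\Gamma$ with $k$ arcs ($\sigma_0=1$, and $\sigma_k=0$ when no such in-forest exists). $Q_k=(q^k_{ij})$ where $q^k_{ij}$ is the total weight of in-forests with $k$ arcs in which $i$ lies in a tree rooted at $j$ ($Q_0=I$, and $Q_k=0$ when no in-forest with $k$ arcs exists). *)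

From mathcomp Require Import all_boot all_order all_algebra.
Set Implicit Arguments. Unset Strict Implicit. Unset Printing Implicit Defensive.
Import Order.TTheory GRing.Theory Num.Theory.
Local Open Scope ring_scope.

Section Forests.
Variables (R : realFieldType) (n : nat) (W : 'M[R]_n).

(* A spanning subgraph of Gamma is given by its set of arcs F. *)
Definition arcs_of_graph : {set 'I_n * 'I_n} := [set e | 0 < W e.1 e.2].

Definition outdeg (F : {set 'I_n * 'I_n}) (i : 'I_n) : nat :=
  #|[set j | (i, j) \in F]|.

Definition wrel (F : {set 'I_n * 'I_n}) : rel 'I_n :=
  fun i j => ((i, j) \in F) || ((j, i) \in F).

Definition wcomp (F : {set 'I_n * 'I_n}) (i : 'I_n) : {set 'I_n} :=
  [set j | connect (wrel F) i j].

(* F is an in-forest of Gamma: a spanning subgraph each of whose weak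
   components is a converging tree (exactly one vertex of outdegree 0,
   all other vertices of outdegree 1). *)
Definition is_inforest (F : {set 'I_n * 'I_n}) : bool :=
  (F \subset arcs_of_graph) &&
  [forall i, (#|[set r in wcomp F i | outdeg F r == 0%N]| == 1%N) &&
             [forall v in wcomp F i, (outdeg F v <= 1)%N]].

Definition sg_weight (F : {set 'I_n * 'I_n}) : R := \prod_(e in F) W e.1 e.2.

Definition sigma (k : nat) : R :=
  \sum_(F : {set 'I_n * 'I_n} | is_inforest F && (#|F| == k)) sg_weight F.

Definition rooted_at (F : {set 'I_n * 'I_n}) (i j : 'I_n) : bool :=
  (j \in wcomp F i) && (outdeg F j == 0%N).

Definition Qmat (k : nat) : 'M[R]_n :=
  \matrix_(i, j) \sum_(F : {set 'I_n * 'I_n} |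
                        [&& is_inforest F, #|F| == k & rooted_at F i j])
                    sg_weight F.

Definition laplacian : 'M[R]_n :=
  \matrix_(i, j) if i == j then \sum_(k | k != i) W i k else - W i j.

End Forests.

From mathcomp Require Import all_boot all_order all_algebra.
From mathcomp Require Import ring lra.
Set Implicit Arguments. Unset Strict Implicit. Unset Printing Implicit Defensive.
Import Order.TTheory GRing.Theory Num.Theory.
Local Open Scope ring_scope.

(* An in-forest F is encoded by its parent map (the identity on roots), so the
   root of the tree containing v is reached after n steps along it.  As L_ii is
   the total weight of the arcs leaving i,
     (-L Q_k)_ij = sum_F sum_m W_im w(F) ([root_F m = j] - [root_F i = j])
   over the in-forests F with k arcs.  When i is not a root of F, the nonzero
   terms cancel in pairs under the involution that rehangs i from its parent
   onto m and remembers the old parent; when i is a root, adding the arc i -> m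
   is a bijection onto the in-forests with k+1 arcs in which i is not a root.
   What is left is (Q_{k+1} - sigma_{k+1} I)_ij.  Finally an in-forest with k
   arcs has n - k roots, so tr Q_k = (n - k) sigma_k, and taking traces in the
   recurrence yields the formula for sigma_{k+1}. *)

Section IterAgreeOff.
Variables (T : finType) (f g : T -> T) (y : T).
Hypothesis fg_off : forall u, u != y -> g u = f u.

Lemma iter_agree_off x t :
  (forall s, (s < t)%N -> iter s f x != y) -> iter t g x = iter t f x.
Proof.
elim: t => //= t IHt hit; rewrite IHt => [|s lt_st]; last exact/hit/ltnW.
exact/fg_off/hit.
Qed.

Lemma iter_neq_noreach x t : ~~ fconnect f x y -> iter t f x != y.
Proof. by apply: contraNneq => <-; apply: fconnect_iter. Qed.

Lemma iter_agree_off_noreach x t : ~~ fconnect f x y -> iter t g x = iter t f x.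
Proof. by move=> xy; apply: iter_agree_off => s _; apply: iter_neq_noreach. Qed.

Lemma iter_findex_agree_off x : fconnect f x y -> iter (findex f x y) g x = y.
Proof.
move=> xy; rewrite iter_agree_off ?iter_findex // => s lt_s; apply/eqP => sxy.
have := findex_iter (ltn_trans lt_s (findex_max xy)).
by rewrite sxy => fs; rewrite fs ltnn in lt_s.
Qed.

End IterAgreeOff.

Lemma fconnect_agree_off (T : finType) (f g : T -> T) y x :
  (forall u, u != y -> g u = f u) -> fconnect g x y = fconnect f x y.
Proof.
move=> fg; have gf u : u != y -> f u = g u by move/fg.
apply/idP/idP => xy.
  by rewrite -(iter_findex_agree_off gf xy) fconnect_iter.
by rewrite -(iter_findex_agree_off fg xy) fconnect_iter.
Qed.

Section FunctionalForests.
Variable n : nat.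
Local Notation arcset := {set 'I_n * 'I_n}.
Implicit Types (F G : arcset) (i m u v w : 'I_n).

Definition sink F v : bool := [forall w, (v, w) \notin F].
Definition parent F v : 'I_n := odflt v [pick w | (v, w) \in F].
Definition functional F : bool := [forall v, outdeg F v <= 1]%N.
Definition root_of F v : 'I_n := iter n (parent F) v.
Definition acyclic F : bool := [forall v, sink F (root_of F v)].
Definition forest F : bool := functional F && acyclic F.

Lemma outdeg_eq0 F v : (outdeg F v == 0%N) = sink F v.
Proof.
rewrite cards_eq0; apply/eqP/forallP => [out0 w | sv].
  by apply/negP => vw; have := in_set0 w; rewrite -out0 inE vw.
by apply/setP => w; rewrite !inE (negbTE (sv w)).
Qed.

Lemma parent_sink F v : sink F v -> parent F v = v.
Proof. by rewrite /parent; case: pickP => // w vw /forallP/(_ w); rewrite vw. Qed.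

Lemma parent_in F v : ~~ sink F v -> (v, parent F v) \in F.
Proof.
by rewrite /parent; case: pickP => //= out /negP[]; apply/forallP => w; rewrite out.
Qed.

Lemma mem_functional F v w :
  functional F -> ((v, w) \in F) = ~~ sink F v && (parent F v == w).
Proof.
move=> /forallP fF; apply/idP/andP => [vw | [nsv /eqP <-]]; last exact: parent_in.
have nsv : ~~ sink F v by apply/negP => /forallP/(_ w); rewrite vw.
split=> //; have /card_le1_eqP le1 := fF v.
by apply/eqP/le1; rewrite inE ?parent_in.
Qed.

Lemma functional_sub F G : F \subset G -> functional G -> functional F.
Proof.
move=> FG /forallP fG; apply/forallP => v; apply: leq_trans (fG v).
by apply/subset_leq_card/subsetP => w; rewrite !inE => /(subsetP FG).
Qed.

Lemma iter_parent_sink F v t s :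
  sink F (iter t (parent F) v) -> (t <= s)%N -> iter s (parent F) v = iter t (parent F) v.
Proof. by move=> st /subnK <-; rewrite iterD iter_fix // parent_sink. Qed.

(* A path of [n] steps has met a sink if it ever meets one (pigeonhole). *)
Lemma sink_root_of F v t : sink F (iter t (parent F) v) -> sink F (root_of F v).
Proof.
move=> st; have vt := fconnect_iter (parent F) t v.
set s := findex (parent F) v (iter t (parent F) v); have lt_sn : (s < n)%N.
  by apply: leq_trans (findex_max vt) _; rewrite -[X in (_ <= X)%N]card_ord max_card.
by rewrite /root_of (@iter_parent_sink F v s) ?iter_findex // ltnW.
Qed.

Lemma sink_root_of_parent F v : sink F (root_of F (parent F v)) = sink F (root_of F v).
Proof.
rewrite /root_of -iterSr; apply/idP/idP => [/sink_root_of // | s].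
by rewrite (iter_parent_sink s (leqnSn n)).
Qed.

Lemma root_of_sink F v : sink F v -> root_of F v = v.
Proof. by move=> sv; rewrite /root_of iter_fix // parent_sink. Qed.

Lemma acyclic_sink_root F v : acyclic F -> sink F (root_of F v).
Proof. by move/forallP. Qed.

Lemma root_of_eq_self F v : acyclic F -> (root_of F v == v) = sink F v.
Proof.
by move=> aF; apply/eqP/idP => [<- | /root_of_sink //]; apply: acyclic_sink_root.
Qed.

Lemma root_of_parent F v : acyclic F -> root_of F (parent F v) = root_of F v.
Proof.
by move=> aF; rewrite /root_of -iterSr iterS parent_sink // acyclic_sink_root.
Qed.

Lemma root_of_fconnect F u v :
  acyclic F -> fconnect (parent F) u v -> root_of F u = root_of F v.
Proof.
by move=> aF; apply: fconnect_invariant => w; apply/eqP/root_of_parent.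
Qed.

Lemma acyclic_parent_noreach F v :
  acyclic F -> ~~ sink F v -> ~~ fconnect (parent F) (parent F v) v.
Proof.
move=> aF; apply: contra => /iter_findex; set t := findex _ _ _ => cyc.
have cycq q : iter (t.+1 * q) (parent F) v = v.
  by elim: q => [|q IHq]; rewrite ?muln0 // mulnS iterD IHq iterSr.
have := acyclic_sink_root v aF; rewrite /root_of => srv.
by rewrite -[v in sink F v](cycq n) (iter_parent_sink srv) // leq_pmull.
Qed.

Lemma connect_wrel_iter F v t : connect (wrel F) v (iter t (parent F) v).
Proof.
elim: t => [|t IHt] /=; first exact: connect0.
apply: (connect_trans IHt); set u := iter t _ v.
have [/parent_sink -> // | nsu] := boolP (sink F u).
by apply: connect1; rewrite /wrel parent_in.
Qed.

Lemma root_of_wrel F u v : forest F -> wrel F u v -> root_of F u = root_of F v.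
Proof.
case/andP=> fF aF; rewrite /wrel !mem_functional //.
by case/orP=> /andP[_ /eqP <-]; rewrite root_of_parent.
Qed.

Lemma connect_wrel_root_of F u v :
  forest F -> connect (wrel F) u v -> root_of F u = root_of F v.
Proof.
move=> fF uv; have cl : closed (wrel F) [pred x | root_of F x == root_of F u].
  by move=> x y /(root_of_wrel fF); rewrite !inE => ->.
by have := closed_connect cl uv; rewrite !inE eqxx => /esym/eqP.
Qed.

Lemma wcomp_sinks F i :
  forest F -> [set r in wcomp F i | outdeg F r == 0%N] = [set root_of F i].
Proof.
move=> fF; apply/setP => r; rewrite !inE outdeg_eq0.
apply/andP/eqP => [[ir sr] | ->].
  by rewrite -(root_of_sink sr) (connect_wrel_root_of fF ir).
by split; [apply: connect_wrel_iter | case/andP: fF => _ /forallP].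
Qed.

Lemma rooted_atE F i j : forest F -> rooted_at F i j = (root_of F i == j).
Proof. by move=> fF; rewrite eq_sym -in_set1 -(wcomp_sinks i fF) inE. Qed.

Lemma is_inforestE (R : realFieldType) (W : 'M[R]_n) F :
  is_inforest W F = (F \subset arcs_of_graph W) && forest F.
Proof.
rewrite /is_inforest; congr (_ && _); apply/forallP/idP => [trees | fF i]; last first.
  rewrite wcomp_sinks // cards1 eqxx /=.
  by apply/forall_inP => v _; case/andP: fF => /forallP.
have fF : functional F.
  apply/forallP => v; have /andP[_ /forall_inP] := trees v.
  by apply; rewrite inE connect0.
rewrite /forest fF; apply/forallP => v.
have /andP[/cards1P[r rE] _] := trees v.
have : r \in [set r in wcomp F v | outdeg F r == 0%N] by rewrite rE set11.
rewrite !inE outdeg_eq0 => /andP[vr sr].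
have cl : closed (wrel F) [pred x | sink F (root_of F x)].
  move=> x y; rewrite /wrel !mem_functional // !inE.
  by case/orP=> /andP[_ /eqP <-]; rewrite sink_root_of_parent.
by have := closed_connect cl vr; rewrite !inE (root_of_sink sr) sr => ->.
Qed.

Definition detach F i : arcset := [set e in F | e.1 != i].
Definition reattach F i m : arcset := (i, m) |: detach F i.

Lemma eq_parent F G v :
  (forall w, ((v, w) \in G) = ((v, w) \in F)) -> parent G v = parent F v.
Proof. by move=> eqFG; rewrite /parent (eq_pick eqFG). Qed.

Lemma eq_sink F G v :
  (forall w, ((v, w) \in G) = ((v, w) \in F)) -> sink G v = sink F v.
Proof. by move=> eqFG; apply: eq_forallb => w; rewrite eqFG. Qed.

Lemma parent_detach_ne F i v : v != i -> parent (detach F i) v = parent F v.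
Proof. by move=> vi; apply: eq_parent => w; rewrite !inE /= andb_idr. Qed.

Lemma sink_detach_ne F i v : v != i -> sink (detach F i) v = sink F v.
Proof. by move=> vi; apply: eq_sink => w; rewrite !inE /= andb_idr. Qed.

Lemma parent_reattach_ne F i m v : v != i -> parent (reattach F i m) v = parent F v.
Proof.
by move=> vi; apply: eq_parent => w; rewrite !inE /= xpair_eqE (negbTE vi) /= andbT.
Qed.

Lemma sink_reattach_ne F i m v : v != i -> sink (reattach F i m) v = sink F v.
Proof.
by move=> vi; apply: eq_sink => w; rewrite !inE /= xpair_eqE (negbTE vi) /= andbT.
Qed.

Lemma sink_detach F i : sink (detach F i) i.
Proof. by apply/forallP => w; rewrite !inE eqxx andbF. Qed.

Lemma mem_reattach F i m w : ((i, w) \in reattach F i m) = (w == m).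
Proof. by rewrite !inE /= xpair_eqE eqxx andbF orbF. Qed.

Lemma parent_reattach F i m : parent (reattach F i m) i = m.
Proof.
rewrite /parent; case: pickP => [w | /(_ m)]; rewrite mem_reattach ?eqxx //.
by move/eqP.
Qed.

Lemma sink_reattach F i m : ~~ sink (reattach F i m) i.
Proof. by apply/forallP => /(_ m); rewrite mem_reattach eqxx. Qed.

Lemma detach_sink F i : sink F i -> detach F i = F.
Proof.
move=> /forallP si; apply/setP => -[u w]; rewrite !inE /=.
by case: eqVneq => [-> | _]; rewrite ?andbT // andbF; apply/esym/negbTE.
Qed.

Lemma detach_reattach F i m : detach (reattach F i m) i = detach F i.
Proof.
by apply/setP => -[u w]; rewrite !inE /= xpair_eqE; case: eqVneq; rewrite ?andbF ?andbT.
Qed.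

Lemma reattach_parent F i : functional F -> ~~ sink F i -> reattach F i (parent F i) = F.
Proof.
move=> fF nsi; apply/setP => -[u w]; rewrite !inE xpair_eqE mem_functional //=.
by case: eqVneq => [-> | _]; rewrite ?andbT // nsi andbF orbF eq_sym.
Qed.

Lemma reattach_reattach F i m m' : reattach (reattach F i m) i m' = reattach F i m'.
Proof. by rewrite {1}/reattach detach_reattach. Qed.

Lemma reattach_detach F i m : reattach (detach F i) i m = reattach F i m.
Proof. by rewrite {1}/reattach detach_sink ?sink_detach. Qed.

Lemma card_reattach F i m : #|reattach F i m| = #|detach F i|.+1.
Proof. by rewrite cardsU1 !inE eqxx andbF. Qed.

Lemma card_detach F i : functional F -> ~~ sink F i -> #|detach F i|.+1 = #|F|.
Proof. by move=> fF nsi; rewrite -(card_reattach F i (parent F i)) reattach_parent. Qed.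

Lemma functional_reattach F i m : functional F -> functional (reattach F i m).
Proof.
move=> /forallP fF; apply/forallP => v; rewrite /outdeg.
have [-> | vi] := eqVneq v i.
  by rewrite (eq_card (B := pred1 m)) ?card1 // => w; rewrite inE mem_reattach.
rewrite (eq_card (B := [set w | (v, w) \in F])) ?fF // => w.
by rewrite !inE /= xpair_eqE (negbTE vi) /= andbT.
Qed.

Lemma forest_reattach F i m :
  forest F -> ~~ fconnect (parent F) m i -> forest (reattach F i m).
Proof.
case/andP=> fF aF mi; rewrite /forest functional_reattach //=.
have off := @parent_reattach_ne F i m.
have sink_off v : ~~ fconnect (parent F) v i -> sink (reattach F i m) (root_of F v).
  by move=> vi; rewrite sink_reattach_ne ?acyclic_sink_root ?iter_neq_noreach.
apply/forallP => v; have [vi | nvi] := boolP (fconnect (parent F) v i).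
  apply: (@sink_root_of _ v (n + (findex (parent F) v i).+1)).
  rewrite iterD iterS (iter_findex_agree_off off vi) parent_reattach.
  by rewrite (iter_agree_off_noreach off _ mi) sink_off.
by rewrite /root_of (iter_agree_off_noreach off _ nvi) sink_off.
Qed.

Lemma root_of_reattach_noreach F i m v :
  ~~ fconnect (parent F) v i -> root_of (reattach F i m) v = root_of F v.
Proof.
by move=> vi; rewrite /root_of (iter_agree_off_noreach (@parent_reattach_ne F i m) _ vi).
Qed.

Lemma root_of_reattach F i m :
  forest F -> ~~ fconnect (parent F) m i -> root_of (reattach F i m) i = root_of F m.
Proof.
move=> fF mi; case/andP: (forest_reattach fF mi) => _ aF'.
by rewrite -(root_of_parent _ aF') parent_reattach root_of_reattach_noreach.
Qed.

Lemma forest_detach F i : forest F -> forest (detach F i).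
Proof.
case/andP=> fF aF; have off := @parent_detach_ne F i.
have sub : detach F i \subset F by apply/subsetP => e; rewrite inE => /andP[].
rewrite /forest (functional_sub sub fF); apply/forallP => v.
have [vi | nvi] := boolP (fconnect (parent F) v i).
  apply: (@sink_root_of _ v (findex (parent F) v i)).
  by rewrite (iter_findex_agree_off off vi) sink_detach.
rewrite /root_of (iter_agree_off_noreach off _ nvi).
by rewrite sink_detach_ne ?acyclic_sink_root ?iter_neq_noreach.
Qed.

Lemma detach_parent_noreach F i :
  forest F -> ~~ sink F i -> ~~ fconnect (parent (detach F i)) (parent F i) i.
Proof.
case/andP=> _ aF nsi; rewrite (fconnect_agree_off _ (@parent_detach_ne F i)).
exact: acyclic_parent_noreach.
Qed.

Lemma root_of_detach_parent F i :
  forest F -> ~~ sink F i -> root_of (detach F i) (parent F i) = root_of F i.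
Proof.
case/andP=> _ aF nsi; have noreach := acyclic_parent_noreach aF nsi.
rewrite /root_of (iter_agree_off_noreach (@parent_detach_ne F i) _ noreach).
exact: root_of_parent.
Qed.

Lemma card_functional F : functional F -> #|F| = #|[set v | ~~ sink F v]|.
Proof.
move=> fF; have FE : F = [set (v, parent F v) | v in [set v | ~~ sink F v]].
  apply/setP => -[u w]; rewrite [LHS]mem_functional //.
  apply/andP/imsetP => [[nsu /eqP <-] | [v]]; first by exists u; rewrite ?inE.
  by rewrite inE => nsv [-> ->].
by rewrite {1}FE card_imset // => u v [].
Qed.

Lemma card_sinks F : functional F -> (#|[set v | sink F v]| + #|F|)%N = n.
Proof.
move=> fF; rewrite card_functional // -[RHS]card_ord -(cardsC [set v | sink F v]).
by congr (_ + _)%N; apply: eq_card => v; rewrite !inE.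
Qed.

End FunctionalForests.

Section InForestMatrices.
Variables (R : realFieldType) (n : nat) (W : 'M[R]_n).
Hypothesis W_diag0 : forall i, W i i = 0.
Hypothesis W_ge0 : forall i j, 0 <= W i j.
Local Notation arcset := {set 'I_n * 'I_n}.
Local Notation wt := (sg_weight W).
Implicit Types (F G : arcset) (i j m : 'I_n).

Lemma is_inforest_forest F : is_inforest W F -> forest F.
Proof. by rewrite is_inforestE => /andP[]. Qed.

Lemma parent_weight_gt0 F i : is_inforest W F -> ~~ sink F i -> 0 < W i (parent F i).
Proof. by rewrite is_inforestE => /andP[/subsetP sub _] /parent_in/sub; rewrite inE. Qed.

Lemma is_inforest_reattach F i m :
  is_inforest W F -> 0 < W i m -> ~~ fconnect (parent F) m i ->
  is_inforest W (reattach F i m).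
Proof.
rewrite !is_inforestE => /andP[sub fF] Wim mi; rewrite forest_reattach // andbT.
apply/subsetP => e; rewrite !inE => /orP[/eqP -> // | /andP[/(subsetP sub)]].
by rewrite inE.
Qed.

Lemma is_inforest_detach F i : is_inforest W F -> is_inforest W (detach F i).
Proof.
rewrite !is_inforestE => /andP[sub fF]; rewrite forest_detach // andbT.
by apply: subset_trans sub; apply/subsetP => e; rewrite inE => /andP[].
Qed.

Lemma sg_weight_reattach F i m : wt (reattach F i m) = W i m * wt (detach F i).
Proof. by rewrite /sg_weight big_setU1 //= !inE eqxx andbF. Qed.

Lemma QmatE k i j :
  Qmat W k i j = \sum_(F | is_inforest W F && (#|F| == k)) wt F * (root_of F i == j)%:R.
Proof.
rewrite /Qmat mxE (eq_bigl _ _ (fun F => andbA _ _ _)) big_mkcondr /=.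
apply: eq_bigr => F /andP[infF _]; rewrite rooted_atE ?is_inforest_forest //.
by case: eqP; rewrite ?mulr1 ?mulr0.
Qed.

Lemma laplacianN_mulmxE (Q : 'M[R]_n) i j :
  (- laplacian W *m Q) i j = \sum_m W i m * (Q m j - Q i j).
Proof.
have offdiag m : m != i -> (- laplacian W) i m = W i m.
  by move=> mi; rewrite !mxE eq_sym (negbTE mi) opprK.
rewrite mxE (bigD1 i) //= [RHS](bigD1 i) //= W_diag0 mul0r add0r.
under eq_bigr => m mi do rewrite offdiag //.
under [RHS]eq_bigr do rewrite mulrBr.
by rewrite sumrB -mulr_suml !mxE eqxx mulNr addrC.
Qed.

Section QmatEntry.
Variables i j : 'I_n.

Definition arc_term (x : arcset * 'I_n) : R :=
  W i x.2 * wt x.1 * ((root_of x.1 x.2 == j)%:R - (root_of x.1 i == j)%:R).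

Lemma arc_term_eq0 F m :
  acyclic F -> ~~ ((0 < W i m) && ~~ fconnect (parent F) m i) -> arc_term (F, m) = 0.
Proof.
move=> aF /nandP[Wim | /negbNE mi]; rewrite /arc_term /=.
  suff -> : W i m = 0 by rewrite !mul0r.
  by apply/eqP; rewrite eq_le W_ge0 andbT leNgt.
by rewrite (root_of_fconnect aF mi) subrr mulr0.
Qed.

Definition rehangable (x : arcset * 'I_n) : bool :=
  [&& is_inforest W x.1, ~~ sink x.1 i, 0 < W i x.2 & ~~ fconnect (parent x.1) x.2 i].

Definition rehang (x : arcset * 'I_n) : arcset * 'I_n :=
  if rehangable x then (reattach x.1 i x.2, parent x.1 i) else x.

Lemma rehangable_rehang F m :
  rehangable (F, m) -> rehangable (reattach F i m, parent F i).
Proof.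
case/and4P=> /= infF nsi Wim mi; have /andP[_ aF] := is_inforest_forest infF.
rewrite /rehangable /= is_inforest_reattach // sink_reattach parent_weight_gt0 //=.
by rewrite (fconnect_agree_off _ (@parent_reattach_ne _ F i m)) acyclic_parent_noreach.
Qed.

Lemma rehangK : involutive rehang.
Proof.
case=> F m; rewrite /rehang; case rx: (rehangable (F, m)); rewrite ?rx //=.
rewrite rehangable_rehang //=.
have /and4P[/is_inforest_forest/andP[fF _] nsi _ _] := rx.
by rewrite parent_reattach reattach_reattach reattach_parent.
Qed.

Lemma arc_term_rehang x :
  is_inforest W x.1 -> ~~ sink x.1 i -> arc_term (rehang x) = - arc_term x.
Proof.
case: x => F m /= infF nsi; have fF := is_inforest_forest infF.
have /andP[functF aF] := fF.
rewrite /rehang; case: ifP => [/and4P[_ _ Wim mi] | /negbT]; last first.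
  by rewrite /rehangable /= infF nsi => /(arc_term_eq0 aF) ->; rewrite oppr0.
have wtF : wt F = W i (parent F i) * wt (detach F i).
  by rewrite -sg_weight_reattach reattach_parent.
rewrite /arc_term /= root_of_reattach_noreach ?acyclic_parent_noreach //.
rewrite root_of_parent // root_of_reattach // sg_weight_reattach wtF; ring.
Qed.

Lemma sum_arc_term_nonsink k :
  \sum_(F | is_inforest W F && (#|F| == k) && ~~ sink F i) \sum_m arc_term (F, m) = 0.
Proof.
rewrite pair_big /=; set S := (X in X = 0).
have domain_rehang x :
  is_inforest W (rehang x).1 && (#|(rehang x).1| == k) && ~~ sink (rehang x).1 i =
  is_inforest W x.1 && (#|x.1| == k) && ~~ sink x.1 i.
  case: x => F m; rewrite /rehang; case: ifP => // /and4P[/= infF nsi Wim mi].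
  have /andP[fF _] := is_inforest_forest infF.
  rewrite is_inforest_reattach // infF sink_reattach nsi.
  by rewrite card_reattach (card_detach fF nsi).
have SN : S = - S.
  rewrite {1}/S (reindex_inj (can_inj rehangK)) /= -sumrN.
  apply: eq_big => [x | x]; first by rewrite !andbT domain_rehang.
  rewrite andbT domain_rehang => /andP[/andP[infF _] nsi].
  by rewrite -!surjective_pairing arc_term_rehang.
by move: SN; lra.
Qed.

Lemma sum_arc_term_sink_at k m :
  \sum_(F | is_inforest W F && (#|F| == k) && sink F i) arc_term (F, m) =
  \sum_(G | [&& is_inforest W G, #|G| == k.+1, ~~ sink G i & parent G i == m])
     wt G * ((root_of G i == j)%:R - (i == j)%:R).
Proof.
rewrite (bigID (fun F => (0 < W i m) && ~~ fconnect (parent F) m i)) /=.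
rewrite [X in _ + X]big1 ?addr0 => [|F /andP[/andP[/andP[infF _] _]]]; last first.
  by apply: arc_term_eq0; case/andP: (is_inforest_forest infF).
rewrite (reindex_onto (fun G => detach G i) (fun F => reattach F i m)) /=; last first.
  by move=> F /andP[/andP[_ si] _]; rewrite detach_reattach detach_sink.
have detach_domain G :
  (is_inforest W (detach G i) && (#|detach G i| == k) && sink (detach G i) i
     && ((0 < W i m) && ~~ fconnect (parent (detach G i)) m i))
    && (reattach (detach G i) i m == G)
  = [&& is_inforest W G, #|G| == k.+1, ~~ sink G i & parent G i == m].
  apply/idP/idP.
    case/andP=> /andP[/andP[/andP[infD /eqP cardD] _] /andP[Wim mi]] /eqP <-.
    rewrite is_inforest_reattach // card_reattach detach_sink ?sink_detach //.
    by rewrite cardD sink_reattach parent_reattach !eqxx.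
  case/and4P=> infG /eqP cardG nsi /eqP <-.
  have fG := is_inforest_forest infG; have /andP[functG _] := fG.
  move: cardG; rewrite -(card_detach functG nsi) => -[->].
  rewrite is_inforest_detach // eqxx sink_detach parent_weight_gt0 //.
  by rewrite detach_parent_noreach // reattach_detach reattach_parent ?eqxx.
apply: eq_big => G; first exact: detach_domain.
rewrite detach_domain => /and4P[infG _ nsi /eqP <-].
have /andP[functG _] := is_inforest_forest infG.
rewrite /arc_term /= root_of_detach_parent ?is_inforest_forest //.
by rewrite (root_of_sink (sink_detach G i)) -sg_weight_reattach reattach_parent.
Qed.

Lemma sum_arc_term_sink k :
  \sum_(F | is_inforest W F && (#|F| == k) && sink F i) \sum_m arc_term (F, m) =
  \sum_(G | is_inforest W G && (#|G| == k.+1))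
     wt G * ((root_of G i == j)%:R - (i == j)%:R).
Proof.
rewrite exchange_big /= [RHS](bigID (fun G => sink G i)) /=.
rewrite [X in _ = X + _]big1 ?add0r => [|G /andP[_ si]]; last first.
  by rewrite root_of_sink // subrr mulr0.
rewrite (partition_big (fun G => parent G i) predT) //=.
apply: eq_bigr => m _; rewrite sum_arc_term_sink_at.
by apply: eq_bigl => G; rewrite !andbA.
Qed.

Lemma Qmat_succ_entry k :
  Qmat W k.+1 i j = (- laplacian W *m Qmat W k + (sigma W k.+1)%:M) i j.
Proof.
rewrite [RHS]mxE laplacianN_mulmxE [_%:M i j]mxE.
have -> : \sum_m W i m * (Qmat W k m j - Qmat W k i j) =
          \sum_(F | is_inforest W F && (#|F| == k)) \sum_m arc_term (F, m).
  rewrite exchange_big; apply: eq_bigr => m _.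
  rewrite !QmatE -sumrB mulr_sumr; apply: eq_bigr => F _.
  by rewrite /arc_term /=; ring.
rewrite (bigID (fun F => sink F i)) /= sum_arc_term_nonsink addr0.
rewrite sum_arc_term_sink QmatE /sigma.
under [X in _ = X + _]eq_bigr do rewrite mulrBr.
by rewrite sumrB -mulr_suml mulr_natr subrK.
Qed.

End QmatEntry.

Lemma trace_Qmat k : \tr (Qmat W k) = sigma W k * (n%:R - k%:R).
Proof.
rewrite /mxtrace; under eq_bigr do rewrite QmatE.
rewrite exchange_big /= mulr_suml; apply: eq_bigr => F /andP[infF /eqP <-].
have /andP[fF aF] := is_inforest_forest infF.
rewrite -mulr_sumr -[n in n%:R](card_sinks fF) natrD addrK; congr (_ * _).
under eq_bigr do rewrite root_of_eq_self //.
by rewrite -natr_sum -sum1dep_card [in RHS]big_mkcond.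
Qed.

End InForestMatrices.

Theorem proposition4 (R : realFieldType) (n : nat) (W : 'M[R]_n)
  (Hn : (1 < n)%N)
  (Hloop : forall i, W i i = 0)
  (Hpos : forall i j, 0 <= W i j) :
  forall k : nat,
    Qmat W k.+1 = - laplacian W *m Qmat W k + (sigma W k.+1)%:M /\
    sigma W k.+1 = \tr (laplacian W *m Qmat W k) / (k.+1)%:R.
Proof.
move=> k; have QE : Qmat W k.+1 = - laplacian W *m Qmat W k + (sigma W k.+1)%:M.
  by apply/matrixP => i j; apply: Qmat_succ_entry.
split=> //; have := trace_Qmat W k.+1.
rewrite QE mxtraceD mxtrace_scalar mulNmx raddfN /= -mulr_natr => trE.
have k1_neq0 : (k.+1)%:R != 0 :> R by rewrite pnatr_eq0.
by apply: (mulIf k1_neq0); rewrite mulfVK //; lra.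
Qed.
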